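(* Let $\mathcal{R}=(\mathcal{F},R)$ be a 3-DCTRS. If $\mathcal{R}$ is terminating, the transformation $\mathcal{U}$ preserves $\to_{\mathcal{R}}$-irreducibility of $\mathcal{R}$, and the TRS $\mathcal{U}(\mathcal{R})$ is confluent, then $\mathcal{R}$ is confluent.
   Context: An oriented CTRS $\mathcal{R}=(\mathcal{F},R)$ has rules $\ell\to r\Leftarrow s_1\approx t_1,\dots,s_n\approx t_n$ ($\ell$ not a variable, $n\ge 0$) where conditions are reachability tests: $s\to_{\mathcal{R}}t$ iff there are a rule, a position $p$ of $s$ and a substitution $\sigma$ with $s|_p=\sigma(\ell)$, $\sigma(s_j)\to^*_{\mathcal{R}}\sigma(t_j)$ for all $j$, and $t=s[\sigma(r)]_p$ (least such relation). It is deterministic (a DCTRS) if for each rule and each $1\le i\le n$, $\mathrm{Var}(s_i)\subseteq\mathrm{Var}(\ell)\cup\bigcup_{j=1}^{i-1}\mathrm{Var}(t_j)$; it is a 3-CTRS if for each rule $\mathrm{Var}(r)\subseteq\mathrm{Var}(\ell)\cup\bigcup_j(\mathrm{Var}(s_j)\cup\mathrm{Var}(t_j))$. $\mathcal{R}$ is terminating if there is no infinite $\to_{\mathcal{R}}$-sequence, and confluent if any two $\to^*_{\mathcal{R}}$-reducts of a common term have a common $\to^*_{\mathcal{R}}$-reduct. Transformation $\mathcal{U}$: each conditional rule $\alpha:\ell\to r\Leftarrow s_1\approx t_1,\dots,s_n\approx t_n$ ($n\ge1$) is replaced by the unconditional rules $\ell\to U^\alpha_1(s_1,\vec x_1)$,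 $U^\alpha_{i-1}(t_{i-1},\vec x_{i-1})\to U^\alpha_i(s_i,\vec x_i)$ for $2\le i\le n$, and $U^\alpha_n(t_n,\vec x_n)\to r$, where the $U^\alpha_i$ are fresh function symbols and $\vec x_i$ is a sequence of the variables in $\mathrm{Var}(\ell)\cup\mathrm{Var}(t_1)\cup\dots\cup\mathrm{Var}(t_{i-1})$; unconditional rules are kept. $\mathcal{U}(\mathcal{R})=(\mathcal{U}(\mathcal{F}),\mathcal{U}(R))$ is the resulting TRS over $\mathcal{F}$ extended with the new symbols. $\mathcal{U}$ preserves $\to_{\mathcal{R}}$-irreducibility if every term $t$ over $\mathcal{F}$ and variables that is $\to_{\mathcal{R}}$-irreducible is also $\to_{\mathcal{U}(\mathcal{R})}$-irreducible. *)

From Stdlib Require Import List Arith PeanoNat.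
Import ListNotations.
Set Implicit Arguments.

Inductive term (Sg : Type) : Type :=
| Var : nat -> term Sg
| Fun : Sg -> list (term Sg) -> term Sg.
Arguments Var {Sg} _.
Arguments Fun {Sg} _ _.

Inductive wf (Sg : Type) (ok : Sg -> nat -> Prop) : term Sg -> Prop :=
| wf_var : forall x, wf ok (Var x)
| wf_fun : forall f ts, ok f (length ts) -> (forall t, In t ts -> wf ok t) -> wf ok (Fun f ts).

Fixpoint vars (Sg : Type) (t : term Sg) : list nat :=
  match t with
  | Var x => [x]
  | Fun _ ts => (fix go (l : list (term Sg)) : list nat :=
                   match l with [] => [] | u :: l' => vars u ++ go l' end) ts
  end.

Fixpoint subst (Sg : Type) (sigma : nat -> term Sg) (t : term Sg) : term Sg :=
  match t with
  | Var x => sigma x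
  | Fun f ts => Fun f (map (subst sigma) ts)
  end.

Fixpoint map_term (Sg S' : Type) (h : Sg -> S') (t : term Sg) : term S' :=
  match t with
  | Var x => Var x
  | Fun f ts => Fun (h f) (map (map_term h) ts)
  end.

Record crule (Sg : Type) : Type := mkRule {
  lhs : term Sg; rhs : term Sg; conds : list (term Sg * term Sg) }.
Arguments mkRule {Sg} _ _ _.

Inductive rtc (A : Type) (r : A -> A -> Prop) : A -> A -> Prop :=
| rtc_refl : forall x, rtc r x x
| rtc_step : forall x y z, r x y -> rtc r y z -> rtc r x z.

Inductive step (Sg : Type) (ok : Sg -> nat -> Prop) (R : crule Sg -> Prop)
  : term Sg -> term Sg -> Prop :=
| step_root : forall rho sigma,
    R rho -> (forall x, wf ok (sigma x)) ->
    (forall c, In c (conds rho) -> rtc (step ok R) (subst sigma (fst c)) (subst sigma (snd c))) ->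
    step ok R (subst sigma (lhs rho)) (subst sigma (rhs rho))
| step_ctx : forall f l1 s t l2,
    step ok R s t -> step ok R (Fun f (l1 ++ s :: l2)) (Fun f (l1 ++ t :: l2)).

Definition terminating (Sg : Type) (ok : Sg -> nat -> Prop) (R : crule Sg -> Prop) : Prop :=
  ~ exists g : nat -> term Sg, wf ok (g 0) /\ forall n, step ok R (g n) (g (S n)).

Definition confluent (Sg : Type) (ok : Sg -> nat -> Prop) (R : crule Sg -> Prop) : Prop :=
  forall s t u, wf ok s -> rtc (step ok R) s t -> rtc (step ok R) s u ->
  exists v, rtc (step ok R) t v /\ rtc (step ok R) u v.

Definition ok_of (F : Type) (arity : F -> nat) : F -> nat -> Prop := fun f n => arity f = n.

Definition is_CTRS (F : Type) (arity : F -> nat) (R : crule F -> Prop) : Prop :=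
  forall rho, R rho ->
    (exists f ts, lhs rho = Fun f ts) /\
    wf (ok_of arity) (lhs rho) /\ wf (ok_of arity) (rhs rho) /\
    (forall c, In c (conds rho) -> wf (ok_of arity) (fst c) /\ wf (ok_of arity) (snd c)).

Definition vars_ts (Sg : Type) (cs : list (term Sg * term Sg)) : list nat :=
  flat_map (fun c => vars (snd c)) cs.

Definition deterministic (Sg : Type) (R : crule Sg -> Prop) : Prop :=
  forall rho, R rho -> forall i, i < length (conds rho) ->
    incl (vars (fst (nth i (conds rho) (Var 0, Var 0))))
         (vars (lhs rho) ++ vars_ts (firstn i (conds rho))).

Definition type3 (Sg : Type) (R : crule Sg -> Prop) : Prop :=
  forall rho, R rho ->
    incl (vars (rhs rho))
         (vars (lhs rho) ++ flat_map (fun c => vars (fst c) ++ vars (snd c)) (conds rho)).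

Section U.
Variables (F : Type) (arity : F -> nat) (R : crule F -> Prop).

(** Symbols of U(F): old symbols, and U^alpha_i represented as (alpha, i). *)
Definition Usym : Type := (F + (crule F * nat))%type.

(** i-th condition (1-based). *)
Definition cond_s (a : crule F) (i : nat) : term F := fst (nth (i - 1) (conds a) (Var 0, Var 0)).
Definition cond_t (a : crule F) (i : nat) : term F := snd (nth (i - 1) (conds a) (Var 0, Var 0)).

Definition xs (a : crule F) (i : nat) : list nat :=
  nodup Nat.eq_dec (vars (lhs a) ++ vars_ts (firstn (i - 1) (conds a))).

Definition U_ok : Usym -> nat -> Prop := fun f n =>
  match f with
  | inl g => arity g = n
  | inr (a, i) => R a /\ 1 <= i <= length (conds a) /\ n = S (length (xs a i))
  end.

Definition lift (t : term F) : term Usym := map_term (@inl F (crule F * nat)) t.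

Definition Uterm (a : crule F) (i : nat) (u : term F) : term Usym :=
  Fun (inr (a, i)) (lift u :: map Var (xs a i)).

Inductive U_rules : crule Usym -> Prop :=
| U_uncond : forall a, R a -> conds a = [] -> U_rules (mkRule (lift (lhs a)) (lift (rhs a)) [])
| U_first : forall a, R a -> 1 <= length (conds a) ->
    U_rules (mkRule (lift (lhs a)) (Uterm a 1 (cond_s a 1)) [])
| U_mid : forall a i, R a -> 2 <= i <= length (conds a) ->
    U_rules (mkRule (Uterm a (i - 1) (cond_t a (i - 1))) (Uterm a i (cond_s a i)) [])
| U_last : forall a, R a -> 1 <= length (conds a) ->
    U_rules (mkRule (Uterm a (length (conds a)) (cond_t a (length (conds a)))) (lift (rhs a)) []).

Definition U_preserves_irreducibility : Prop :=
  forall t, wf (ok_of arity) t -> (forall u, ~ step (ok_of arity) R t u) ->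
  forall u, ~ step U_ok U_rules (lift t) u.
End U.

(* Every R-step is simulated in U(R) on the lifted terms: a conditional rule
   becomes the chain l -> U_1(s_1, ..) ->* U_1(t_1, ..) -> ... -> r, the
   conditions being rewritten inside the arguments of the U symbols.
   Now let s ->* t and s ->* u.  By termination t and u reach R-normal forms
   t' and u'.  In U(R), lift s rewrites to lift t' and to lift u', which are
   U(R)-normal because U preserves irreducibility; confluence of U(R) thus
   forces lift t' = lift u', hence t' = u' since lifting is injective. *)

From Stdlib Require Import List PeanoNat Lia Classical ClassicalEpsilon.
Import ListNotations.

Lemma rtc_trans {A : Type} {r : A -> A -> Prop} {x y z : A} :
  rtc r x y -> rtc r y z -> rtc r x z.
Proof. induction 1; intros; [assumption | econstructor; eauto]. Qed.

Lemma rtc_once {A : Type} {r : A -> A -> Prop} {x y : A} : r x y -> rtc r x y.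
Proof. intros; econstructor; [eassumption | constructor]. Qed.

Lemma rtc_invariant {A : Type} {r : A -> A -> Prop} (P : A -> Prop) :
  (forall x y, r x y -> P x -> P y) -> forall x y, rtc r x y -> P x -> P y.
Proof. intros HP x y; induction 1; eauto. Qed.

Lemma rtc_normal_form_eq {A : Type} {r : A -> A -> Prop} {u v : A} :
  (forall w, ~ r u w) -> rtc r u v -> u = v.
Proof.
  intros Hnf H; destruct H as [| x y z Hxy _]; [reflexivity |].
  exfalso; exact (Hnf y Hxy).
Qed.

Lemma normal_form_exists {A : Type} {r : A -> A -> Prop} {P : A -> Prop} :
  (forall x y, r x y -> P x -> P y) ->
  ~ (exists g : nat -> A, P (g 0) /\ forall n, r (g n) (g (S n))) ->
  forall x, P x -> exists n, rtc r x n /\ forall w, ~ r n w.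
Proof.
  intros HP Hterm x Hx. apply NNPP; intro Hnone.
  set (bad := fun y => P y /\ ~ exists n, rtc r y n /\ forall w, ~ r n w).
  assert (Hbad_step : forall y, bad y -> exists z, r y z /\ bad z).
  { intros y [Hy Hy_nf]. apply NNPP; intro Hstuck. apply Hy_nf.
    exists y; split; [constructor |]. intros z Hyz. apply Hstuck.
    exists z; split; [exact Hyz | split; [exact (HP _ _ Hyz Hy) |]].
    intros [n [Hzn Hn]]. apply Hy_nf. exists n; split; [econstructor; eauto | exact Hn]. }
  set (next := fun y => epsilon (inhabits x) (fun z => r y z /\ bad z)).
  assert (Hnext : forall y, bad y -> r y (next y) /\ bad (next y))
    by (intros y Hy; exact (epsilon_spec _ _ (Hbad_step y Hy))).
  assert (Hchain : forall n, bad (Nat.iter n next x)).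
  { induction n as [|n IH]; [split; assumption | exact (proj2 (Hnext _ IH))]. }
  apply Hterm. exists (fun n => Nat.iter n next x).
  split; [exact Hx |]. intro n. exact (proj1 (Hnext _ (Hchain n))).
Qed.

Fixpoint term_nested_ind {Sg : Type} (P : term Sg -> Prop)
  (Hvar : forall x, P (Var x)) (Hfun : forall f ts, Forall P ts -> P (Fun f ts))
  (t : term Sg) : P t :=
  match t with
  | Var x => Hvar x
  | Fun f ts => Hfun f ts
      ((fix go (l : list (term Sg)) : Forall P l :=
          match l with
          | [] => Forall_nil _
          | u :: l' => Forall_cons u (term_nested_ind P Hvar Hfun u) (go l')
          end) ts)
  end.

Lemma map_term_inj {Sg S' : Type} {h : Sg -> S'} :
  (forall f g, h f = h g -> f = g) ->
  forall t u, map_term h t = map_term h u -> t = u.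
Proof.
  intros Hh t; induction t as [x | f ts IH] using term_nested_ind;
    intros [y | g us] Heq; simpl in Heq; try discriminate; [congruence |].
  injection Heq as Hfg Hts; rewrite (Hh _ _ Hfg); f_equal.
  revert us Hts; induction IH as [| t ts Ht _ IHts]; intros [| u us] Hts;
    simpl in Hts; try discriminate; [reflexivity |].
  injection Hts as Htu Hts; f_equal; auto.
Qed.

Lemma map_term_subst {Sg S' : Type} (h : Sg -> S') sigma t :
  map_term h (subst sigma t) = subst (fun x => map_term h (sigma x)) (map_term h t).
Proof.
  induction t as [x | f ts IH] using term_nested_ind; simpl; [reflexivity |].
  f_equal; rewrite !map_map; induction IH; simpl; f_equal; auto.
Qed.

Lemma wf_subst {Sg : Type} {ok : Sg -> nat -> Prop} {sigma t} :
  wf ok t -> (forall x, wf ok (sigma x)) -> wf ok (subst sigma t).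
Proof.
  induction 1 as [x | f ts Hf _ IH]; intros Hsigma; simpl; [auto |].
  constructor; [rewrite length_map; exact Hf |].
  intros u Hu; apply in_map_iff in Hu as [v [<- Hv]]; auto.
Qed.

Lemma wf_map_term {Sg S' : Type} {ok : Sg -> nat -> Prop} {ok' : S' -> nat -> Prop}
  {h : Sg -> S'} {t} :
  (forall f n, ok f n -> ok' (h f) n) -> wf ok t -> wf ok' (map_term h t).
Proof.
  intros Hh; induction 1 as [x | f ts Hf _ IH]; simpl; constructor.
  - rewrite length_map; auto.
  - intros u Hu; apply in_map_iff in Hu as [v [<- Hv]]; auto.
Qed.

Section Rewriting.
Context {Sg : Type} {ok : Sg -> nat -> Prop} {R : crule Sg -> Prop}.

Lemma step_wf :
  (forall rho, R rho -> wf ok (rhs rho)) ->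
  forall s t, step ok R s t -> wf ok s -> wf ok t.
Proof.
  intros Hrhs s t; induction 1 as [rho sigma HR Hsigma _ | f l1 s t l2 _ IH]; intros Hs.
  - apply wf_subst; auto.
  - inversion Hs as [| f' ts Hf Hargs]; subst.
    constructor; [rewrite length_app in *; exact Hf |].
    intros u Hu; apply in_app_or in Hu as [Hu | [<- | Hu]];
      [| apply IH |]; apply Hargs, in_or_app; simpl; auto.
Qed.

Lemma rtc_step_ctx f l1 l2 s t :
  rtc (step ok R) s t -> rtc (step ok R) (Fun f (l1 ++ s :: l2)) (Fun f (l1 ++ t :: l2)).
Proof. induction 1; econstructor; try apply step_ctx; eauto. Qed.

Lemma step_unconditional_root l r sigma :
  R (mkRule l r []) -> (forall x, wf ok (sigma x)) ->
  step ok R (subst sigma l) (subst sigma r).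
Proof.
  intros HR Hsigma.
  exact (@step_root _ ok R (mkRule l r []) sigma HR Hsigma (fun c Hc => False_ind _ Hc)).
Qed.

(* Induction principle for ->*: because of the conditions, [step] is nested
   in [rtc], so Rocq's [step_ind] gives no hypothesis for the conditions. *)
Section RtcStepInd.
Variable Q : term Sg -> term Sg -> Prop.
Hypothesis Q_refl : forall x, Q x x.
Hypothesis Q_trans : forall x y z, Q x y -> Q y z -> Q x z.
Hypothesis Q_ctx : forall f l1 s t l2,
  Q s t -> Q (Fun f (l1 ++ s :: l2)) (Fun f (l1 ++ t :: l2)).
Hypothesis Q_rule : forall rho sigma, R rho -> (forall x, wf ok (sigma x)) ->
  (forall c, In c (conds rho) -> Q (subst sigma (fst c)) (subst sigma (snd c))) ->
  Q (subst sigma (lhs rho)) (subst sigma (rhs rho)).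

Fixpoint step_subrel s t (H : step ok R s t) {struct H} : Q s t :=
  match H in step _ _ s t return Q s t with
  | @step_root _ _ _ rho sigma HR Hsigma Hconds =>
      @Q_rule rho sigma HR Hsigma (fun c Hc =>
        (fix rtc_subrel a b (H' : rtc (step ok R) a b) : Q a b :=
           match H' in rtc _ a b return Q a b with
           | @rtc_refl _ _ x => Q_refl x
           | @rtc_step _ _ x y z Hxy Hyz =>
               @Q_trans x y z (@step_subrel x y Hxy) (rtc_subrel y z Hyz)
           end) _ _ (Hconds c Hc))
  | @step_ctx _ _ _ f l1 s0 t0 l2 H0 => @Q_ctx f l1 s0 t0 l2 (@step_subrel s0 t0 H0)
  end.

Lemma rtc_step_subrel s t : rtc (step ok R) s t -> Q s t.
Proof. induction 1; eauto using step_subrel. Qed.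
End RtcStepInd.
End Rewriting.

Section Simulation.
Context {F : Type} {arity : F -> nat} {R : crule F -> Prop}.

Local Notation ok := (ok_of arity).
Local Notation Uok := (U_ok arity R).
Local Notation Ustep := (step (U_ok arity R) (U_rules R)).

Lemma lift_inj (t u : term F) : lift t = lift u -> t = u.
Proof. apply map_term_inj; congruence. Qed.

Lemma lift_subst sigma (t : term F) :
  lift (subst sigma t) = subst (fun x => lift (sigma x)) (lift t).
Proof. apply map_term_subst. Qed.

Lemma wf_lift {t} : wf ok t -> wf Uok (lift t).
Proof. apply wf_map_term; auto. Qed.

Section RuleChain.
Variables (rho : crule F) (sigma : nat -> term F).
Hypothesis HR : R rho.
Hypothesis Hsigma : forall x, wf ok (sigma x).
Hypothesis Hconds : forall c, In c (conds rho) ->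
  rtc Ustep (lift (subst sigma (fst c))) (lift (subst sigma (snd c))).

Let n := length (conds rho).
Let lsigma := fun x => lift (sigma x).

Lemma wf_lsigma x : wf Uok (lsigma x).
Proof. apply wf_lift, Hsigma. Qed.

Lemma Ustep_rule l r :
  U_rules R (mkRule l r []) -> Ustep (subst lsigma l) (subst lsigma r).
Proof. intros; apply step_unconditional_root; auto using wf_lsigma. Qed.

Lemma U_cond_rtc i : 1 <= i <= n ->
  rtc Ustep (subst lsigma (Uterm rho i (cond_s rho i)))
            (subst lsigma (Uterm rho i (cond_t rho i))).
Proof.
  intros Hi. apply (rtc_step_ctx _ [] _).
  unfold lsigma; rewrite <- !lift_subst.
  apply Hconds, nth_In. unfold n in Hi; lia.
Qed.

Lemma U_chain_prefix k : 1 <= k <= n ->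
  rtc Ustep (subst lsigma (lift (lhs rho)))
            (subst lsigma (Uterm rho k (cond_t rho k))).
Proof.
  induction k as [| [| k] IH]; intros Hk; [lia | |].
  - eapply rtc_step; [apply Ustep_rule, U_first; auto; lia |].
    apply U_cond_rtc; lia.
  - eapply rtc_trans; [apply IH; lia |].
    eapply rtc_step; [| apply U_cond_rtc; lia].
    replace (S k) with (S (S k) - 1) at 1 2 by lia.
    apply Ustep_rule, U_mid; auto; unfold n in Hk; lia.
Qed.

Lemma U_simulates_rule :
  rtc Ustep (lift (subst sigma (lhs rho))) (lift (subst sigma (rhs rho))).
Proof.
  rewrite !lift_subst; fold lsigma.
  destruct (Nat.eq_dec n 0) as [Hn | Hn].
  - apply rtc_once, Ustep_rule, U_uncond; [assumption |].
    apply length_zero_iff_nil, Hn.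
  - eapply rtc_trans; [apply (U_chain_prefix n); lia |].
    apply rtc_once, Ustep_rule, U_last; [assumption | unfold n in Hn; lia].
Qed.
End RuleChain.

Lemma U_simulates_rtc {s t} : rtc (step ok R) s t -> rtc Ustep (lift s) (lift t).
Proof.
  apply (rtc_step_subrel (fun s t => rtc Ustep (lift s) (lift t))).
  - constructor.
  - intros; eapply rtc_trans; eassumption.
  - intros f l1 s' t' l2 H; unfold lift; simpl; rewrite !map_app.
    apply rtc_step_ctx, H.
  - exact U_simulates_rule.
Qed.

End Simulation.

Theorem theorem29 (F : Type) (arity : F -> nat) (R : crule F -> Prop) :
  is_CTRS arity R -> deterministic R -> type3 R ->
  terminating (ok_of arity) R ->
  U_preserves_irreducibility arity R ->
  confluent (U_ok arity R) (U_rules R) ->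
  confluent (ok_of arity) R.
Proof.
  intros HR _ _ Hterm Hpres HU s t u Hs Hst Hsu.
  pose proof (step_wf (fun rho H => proj1 (proj2 (proj2 (HR rho H))))) as Hwf.
  pose proof (rtc_invariant _ Hwf) as Hrtc_wf.
  destruct (normal_form_exists Hwf Hterm _ (Hrtc_wf _ _ Hst Hs)) as [t' [Htt' Ht']].
  destruct (normal_form_exists Hwf Hterm _ (Hrtc_wf _ _ Hsu Hs)) as [u' [Huu' Hu']].
  pose proof (U_simulates_rtc (rtc_trans Hst Htt')) as Hs_t'.
  pose proof (U_simulates_rtc (rtc_trans Hsu Huu')) as Hs_u'.
  destruct (HU _ _ _ (wf_lift Hs) Hs_t' Hs_u') as [v [Ht'v Hu'v]].
  apply rtc_normal_form_eq in Ht'v; [| apply Hpres; eauto].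
  apply rtc_normal_form_eq in Hu'v; [| apply Hpres; eauto].
  subst v; apply lift_inj in Hu'v; subst u'.
  exists t'; split; assumption.
Qed.
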